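(* Let jobs $1,\dots,m$ form a feasible set, and let $r\le d$ be times with $r_j\ge r$ and $d_j\le d$ for all $j$. Let $\alpha\ge 1$ and let $\alpha$-DLY be any scheduling policy that, at every time $t$, only runs work of a job $j$ whose current stretch $(t-r_j)/(d_j-r_j)$ is at least $\alpha$. Then the total amount of time during which $\alpha$-DLY runs these jobs (until all are completed) is at most $(d-r)/\alpha$.
   Context: Jobs $j$ have release time $r_j$, due date $d_j>r_j$, work $w_j>0$, and linear speed function $f_j(t)=m_j(t-r_j)$ with $m_j>0$. A single processor runs at most one job at a time, preemption is allowed, and running job $j$ during a set of times $S$ completes $\int_S f_j(t)\,dt$ units of its work. A set of jobs is feasible if some schedule runs each job only within $[r_j,d_j]$ and completes it by $d_j$. *)

From mathcomp Require Import all_boot all_order all_algebra.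
From mathcomp Require Import all_classical all_reals all_analysis.
Set Implicit Arguments. Unset Strict Implicit. Unset Printing Implicit Defensive.
Import Order.TTheory GRing.Theory Num.Theory.
Local Open Scope classical_set_scope.
Local Open Scope ring_scope.

(* A job: release time r_j, due date d_j, work w_j, slope m_j of the
   linear speed function f_j(t) = m_j (t - r_j). *)
Record job (R : realType) := Job {
  release : R; due : R; work : R; slope : R }.

Definition valid_job (R : realType) (J : job R) : Prop :=
  release J < due J /\ 0 < work J /\ 0 < slope J.

Definition speed (R : realType) (J : job R) (t : R) : R :=
  slope J * (t - release J).

(* A (preemptive, single-processor) schedule assigns to every time t
   either a job index (the job run at time t) or None (idle). *)
Definition schedule (R : realType) (m : nat) := R -> option 'I_m.

Definition run_set (R : realType) (m : nat) (s : schedule R m) (j : 'I_m)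
  : set R := [set t | s t = Some j].

Definition measurable_schedule (R : realType) (m : nat) (s : schedule R m) :=
  forall j : 'I_m, measurable (run_set s j).

Definition work_done (R : realType) (J : job R) (S : set R) : \bar R :=
  (\int[@lebesgue_measure R]_(t in S) (speed J t)%:E)%E.

Definition feasible (R : realType) (m : nat) (jobs : 'I_m -> job R) : Prop :=
  exists s : schedule R m, measurable_schedule s /\
    forall j : 'I_m, run_set s j `<=` `[release (jobs j), due (jobs j)] /\
      ((work (jobs j))%:E <= work_done (jobs j) (run_set s j))%E.

Definition stretch (R : realType) (J : job R) (t : R) : R :=
  (t - release J) / (due J - release J).

Definition alpha_DLY (R : realType) (m : nat) (alpha : R)
  (jobs : 'I_m -> job R) (s : schedule R m) : Prop :=
  measurable_schedule s /\
  (forall (t : R) (j : 'I_m), s t = Some j -> alpha <= stretch (jobs j) t) /\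
  (forall j : 'I_m, work_done (jobs j) (run_set s j) = (work (jobs j))%:E).

Definition busy_time (R : realType) (m : nat) (s : schedule R m) : \bar R :=
  @lebesgue_measure R (\bigcup_(j in [set: 'I_m]) run_set s j).

From mathcomp Require Import all_boot all_order all_algebra.
From mathcomp Require Import all_classical all_reals all_analysis.
From mathcomp Require Import lra measurable_realfun.
Set Implicit Arguments. Unset Strict Implicit. Unset Printing Implicit Defensive.
Import Order.TTheory GRing.Theory Num.Theory.
Local Open Scope classical_set_scope.
Local Open Scope ring_scope.

(* Job j runs at speed at least alpha * f_j(d_j) whenever its stretch is at
   least alpha, and at speed at most f_j(d_j) inside its window [r_j, d_j].
   Comparing the work w_j that alpha-DLY and a feasible schedule both complete
   on j, alpha-DLY therefore spends at most 1/alpha of the time the feasible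
   schedule spends on j.  Summing over the jobs, whose run sets are disjoint,
   and using that the feasible schedule runs inside [r, d] gives the bound. *)

Section IntegralCstBounds.
Context d (T : measurableType d) (R : realType) (mu : {measure set T -> \bar R}).
Variables (D : set T) (f : T -> R) (c : R).
Hypotheses (mD : measurable D) (mf : measurable_fun D f).

Lemma integral_ge_cst : 0 <= c -> (forall t, D t -> c <= f t) ->
  (c%:E * mu D <= \int[mu]_(t in D) (f t)%:E)%E.
Proof.
move=> c0 cf; rewrite -integral_cst //.
by apply: ge0_le_integral => //; exact/measurable_EFinP.
Qed.

Lemma integral_le_cst : (forall t, D t -> 0 <= f t <= c) ->
  (\int[mu]_(t in D) (f t)%:E <= c%:E * mu D)%E.
Proof.
move=> fc; rewrite -integral_cst //; apply: ge0_le_integral => //.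
- by move=> t /fc /andP[f0 _]; rewrite lee_fin.
- exact/measurable_EFinP.
- by move=> t /fc /andP[_ fc']; rewrite lee_fin.
Qed.

End IntegralCstBounds.

Section JobSpeed.
Context (R : realType) (J : job R).
Hypothesis vJ : valid_job J.

Lemma measurable_speed (D : set R) : measurable_fun D (speed J).
Proof. by apply: measurable_funM => //; apply: measurable_funD. Qed.

Lemma speed_due_gt0 : 0 < speed J (due J).
Proof. by case: vJ => rd [_ m0]; rewrite /speed mulr_gt0 // subr_gt0. Qed.

Lemma speed_ge_stretch (a t : R) :
  a <= stretch J t -> a * speed J (due J) <= speed J t.
Proof.
case: vJ => rd [_ m0]; have p0 : 0 < due J - release J by rewrite subr_gt0.
by rewrite /stretch /speed ler_pdivlMr //; nra.
Qed.

Lemma speed_window_bounds (t : R) : t \in `[release J, due J] ->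
  0 <= speed J t <= speed J (due J).
Proof.
case: vJ => rd [_ m0]; rewrite in_itv /= => /andP[rt td].
by apply/andP; split; rewrite /speed; nra.
Qed.

Lemma work_done_ge_stretch (a : R) (S : set R) : 0 <= a -> measurable S ->
  (forall t, S t -> a <= stretch J t) ->
  ((a * speed J (due J))%:E * lebesgue_measure S <= work_done J S)%E.
Proof.
move=> a0 mS aS; apply: integral_ge_cst => //; first exact: measurable_speed.
  by rewrite mulr_ge0 // ltW // speed_due_gt0.
by move=> t /aS; exact: speed_ge_stretch.
Qed.

Lemma work_done_le_window (S : set R) : measurable S ->
  S `<=` `[release J, due J] ->
  (work_done J S <= (speed J (due J))%:E * lebesgue_measure S)%E.
Proof.
move=> mS SW; apply: integral_le_cst => //; first exact: measurable_speed.
by move=> t /SW; exact: speed_window_bounds.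
Qed.

Lemma measure_le_inv_stretch (a : R) (S F : set R) :
  0 < a -> measurable S -> measurable F ->
  (forall t, S t -> a <= stretch J t) -> F `<=` `[release J, due J] ->
  (work_done J S <= work_done J F)%E ->
  (lebesgue_measure S <= a^-1%:E * lebesgue_measure F)%E.
Proof.
move=> a0 mS mF aS FW SF; set p := speed J (due J).
have ap0 : 0 < a * p by rewrite mulr_gt0 // speed_due_gt0.
rewrite -(@lee_pmul2l _ (a * p)%:E) // muleA -EFinM mulrAC divff ?gt_eqF //.
rewrite mul1r (le_trans (work_done_ge_stretch (ltW a0) mS aS)) //.
exact: le_trans SF (work_done_le_window mF FW).
Qed.

End JobSpeed.

Section BusyTime.
Context (R : realType) (m : nat).

Lemma run_set_trivIset (s : schedule R m) : trivIset setT (run_set s).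
Proof. by move=> i j _ _ [t []]; rewrite /run_set /= => -> []. Qed.

Lemma busy_time_sum (s : schedule R m) : measurable_schedule s ->
  busy_time s = (\sum_(j \in [set: 'I_m]) lebesgue_measure (run_set s j))%E.
Proof.
move=> ms; apply: measure_fin_bigcup => [||j _]; last exact: ms.
- exact: finite_finset.
- exact: run_set_trivIset.
Qed.

Lemma busy_time_le_scaled (s s' : schedule R m) (c : R) :
  measurable_schedule s -> measurable_schedule s' -> 0 <= c ->
  (forall j, lebesgue_measure (run_set s j) <=
             c%:E * lebesgue_measure (run_set s' j))%E ->
  (busy_time s <= c%:E * busy_time s')%E.
Proof.
move=> ms ms' c0 ss'; rewrite !busy_time_sum // !fsbig_finite //=.
rewrite ge0_sume_distrr; last by move=> j _; exact: measure_ge0.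
by apply: lee_sum => j _; exact: ss'.
Qed.

Lemma busy_time_le_window (s : schedule R m) (r d : R) :
  measurable_schedule s -> r <= d ->
  (forall j, run_set s j `<=` `[r, d]) -> (busy_time s <= (d - r)%:E)%E.
Proof.
move=> ms rd sW; have -> : (d - r)%:E = lebesgue_measure [set` `[r, d]].
  rewrite lebesgue_measure_itv /= lte_fin.
  case: ifPn => [_|]; first by rewrite EFinD EFinN.
  by rewrite -leNgt => dr; rewrite (@le_anti _ _ d r) ?dr ?rd // subrr.
rewrite /busy_time; apply: le_measure; rewrite ?inE.
- by apply: fin_bigcup_measurable => // j _; exact: ms.
- exact: measurable_itv.
- by move=> t [j _ /sW].
Qed.

End BusyTime.

Theorem mainTheorem6 (R : realType) (m : nat) (jobs : 'I_m -> job R)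
  (r d alpha : R) (s : schedule R m) :
  (forall j, valid_job (jobs j)) ->
  feasible jobs ->
  r <= d ->
  (forall j, r <= release (jobs j)) ->
  (forall j, due (jobs j) <= d) ->
  1 <= alpha ->
  alpha_DLY alpha jobs s ->
  (busy_time s <= ((d - r) / alpha)%:E)%E.
Proof.
move=> valid [s' [ms' feas]] rd rj dj a1 [ms [dly_stretch dly_done]].
have a0 : 0 < alpha by apply: (lt_le_trans ltr01 a1).
have per_job j : (lebesgue_measure (run_set s j) <=
                  alpha^-1%:E * lebesgue_measure (run_set s' j))%E.
  have [W' done'] := feas j.
  apply: (measure_le_inv_stretch (valid j) a0 (ms j) (ms' j)) W' _.
    by move=> t; exact: dly_stretch.
  by rewrite dly_done.
have s'W j : run_set s' j `<=` `[r, d].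
  move=> t /(proj1 (feas j)); rewrite /= !in_itv /= => /andP[rt td].
  by rewrite (le_trans (rj j) rt) (le_trans td (dj j)).
apply: (le_trans (busy_time_le_scaled ms ms' _ per_job)).
  by rewrite invr_ge0 ltW.
rewrite mulrC EFinM lee_pmul2l ?lte_fin ?invr_gt0 //.
exact: busy_time_le_window.
Qed.
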